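(* Let $H$ be a Heyting algebra and $f,g:H\to H$ monotone polynomials such that $\mu.f=f^m(\bot)$ and $\mu.g=g^n(\bot)$ for some $m,n\ge0$. Then $\mu.(f\wedge g)=(f\wedge g)^{m+n-1}(\bot)$, with the convention $k^{j}(\bot)=\bot$ for $j<0$.
   Context: A function $f:H\to H$ is a polynomial if there exist an IPC formula $\phi$, a variable $x$ and a valuation $v$ in $H$ of the other variables of $\phi$ such that $f(h)=[\![\phi]\!]_{(v,h/x)}$ for all $h$. $f\wedge g$ is the pointwise meet; $\mu$ denotes least fixed point. *)

From HB Require Import structures.
From mathcomp Require Import all_boot all_order.
Set Implicit Arguments. Unset Strict Implicit. Unset Printing Implicit Defensive.
Import Order.TTheory.
Local Open Scope order_scope.

Record heytingAlgebra := HeytingAlgebra {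
  ha_disp : Order.disp_t;
  ha_sort : tbLatticeType ha_disp;
  ha_imp : ha_sort -> ha_sort -> ha_sort;
  ha_impP : forall a b x : ha_sort, (x `&` a <= b) = (x <= ha_imp a b)
}.
Coercion ha_sort : heytingAlgebra >-> tbLatticeType.

Inductive ipc_formula : Type :=
  | FVar of nat
  | FBot
  | FTop
  | FAnd of ipc_formula & ipc_formula
  | FOr of ipc_formula & ipc_formula
  | FImp of ipc_formula & ipc_formula.

Fixpoint ipc_eval (H : heytingAlgebra) (v : nat -> H) (phi : ipc_formula) : H :=
  match phi with
  | FVar i => v i
  | FBot => \bot
  | FTop => \top
  | FAnd p q => ipc_eval v p `&` ipc_eval v q
  | FOr p q => ipc_eval v p `|` ipc_eval v q
  | FImp p q => ha_imp (ipc_eval v p) (ipc_eval v q)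
  end.

Definition upd_val (H : heytingAlgebra) (v : nat -> H) (x : nat) (h : H) : nat -> H :=
  fun i => if i == x then h else v i.

Definition is_polynomial (H : heytingAlgebra) (f : H -> H) : Prop :=
  exists (phi : ipc_formula) (x : nat) (v : nat -> H),
    forall h : H, f h = ipc_eval (upd_val v x h) phi.

Definition monotone (H : heytingAlgebra) (f : H -> H) : Prop :=
  forall a b : H, a <= b -> f a <= f b.

Definition is_lfp (H : heytingAlgebra) (f : H -> H) (a : H) : Prop :=
  f a = a /\ forall b : H, f b = b -> a <= b.

Definition fmeet (H : heytingAlgebra) (f g : H -> H) : H -> H :=
  fun h => f h `&` g h.

(* Polynomials are compatible with meets: if [c `&` a = c `&` b] then
   [c `&` f a <= f b], by induction on the formula (for implication, use the
   hypothesis in both directions).  Hence [f^i(bot) `&` g^(j+1)(bot)]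
   bounds [f] of the [(i+j)]-th iterate of [f /\ g], and by induction
   [f^m(bot) `&` g^n(bot) <= (f /\ g)^(m+n-1)(bot)].  Conversely every iterate
   of [f /\ g] lies below the prefixed point [mu.f `&` mu.g], so the two agree,
   and this common value is a fixed point. *)
From mathcomp Require Import all_boot all_order.
Set Implicit Arguments.
Unset Strict Implicit.
Unset Printing Implicit Defensive.
Local Open Scope order_scope.
Import Order.TTheory.

Section HeytingPolynomials.
Variable H : heytingAlgebra.
Implicit Types (a b c : H) (f g h : H -> H).

Lemma ha_imp_meet_le a b : ha_imp a b `&` a <= b.
Proof. by rewrite ha_impP. Qed.

Lemma ha_meetUr_le a b c : c `&` (a `|` b) <= (c `&` a) `|` (c `&` b).
Proof.
by rewrite meetC ha_impP leUx -!ha_impP !(meetC _ c) leUl leUr.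
Qed.

Lemma ipc_eval_upd_meet_le (v : nat -> H) (x : nat) (phi : ipc_formula) a b c :
  c `&` a = c `&` b ->
  c `&` ipc_eval (upd_val v x a) phi <= ipc_eval (upd_val v x b) phi.
Proof.
elim: phi a b => [i||| p IHp q IHq | p IHp q IHq | p IHp q IHq] a b E /=.
- by rewrite /upd_val; case: (i == x); rewrite ?E leIr.
- exact: leIr.
- exact: lex1.
- rewrite lexI; apply/andP; split.
    by apply: le_trans (IHp _ _ E); apply: leI2 => //; apply: leIl.
  by apply: le_trans (IHq _ _ E); apply: leI2 => //; apply: leIr.
- by apply: le_trans (ha_meetUr_le _ _ _) _; apply: leU2; [apply: IHp | apply: IHq].
- rewrite -ha_impP; apply: le_trans (IHq _ _ E).
  have Pb_le_Pa := IHp _ _ (esym E).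
  rewrite lexI; apply/andP; split; first by rewrite -meetA; apply: leIl.
  apply: le_trans (ha_imp_meet_le _ _); rewrite lexI; apply/andP; split.
    by rewrite -meetA meetCA; apply: leIl.
  by apply: le_trans Pb_le_Pa; apply: leI2 => //; apply: leIl.
Qed.

Lemma polynomial_meet_le f a b c :
  is_polynomial f -> c `&` a = c `&` b -> c `&` f a <= f b.
Proof. by move=> [phi [x [v fE]]]; rewrite !fE; apply: ipc_eval_upd_meet_le. Qed.

Lemma polynomial_meet_shift f a b c :
  is_polynomial f -> monotone f -> a `&` c <= b -> f a `&` c <= f b.
Proof.
move=> pf mf acb; rewrite meetC; apply: le_trans (mf _ _ acb).
by apply: polynomial_meet_le => //; rewrite meetCA meetxx meetC.
Qed.

Lemma fmeet_monotone f g : monotone f -> monotone g -> monotone (fmeet f g).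
Proof. by move=> mf mg a b ab; apply: leI2; [apply: mf | apply: mg]. Qed.

Lemma iter_bot_le_prefixpoint h b k :
  monotone h -> h b <= b -> iter k h \bot <= b.
Proof.
move=> mh hb; elim: k => [|k IH] /=; first exact: le0x.
exact: le_trans (mh _ _ IH) hb.
Qed.

Lemma iter_bot_le_succ h k : monotone h -> iter k h \bot <= iter k.+1 h \bot.
Proof. by move=> mh; elim: k => [|k IH] /=; [apply: le0x | apply: mh]. Qed.

Lemma is_lfp_iter_bot h k :
  monotone h -> h (iter k h \bot) <= iter k h \bot -> is_lfp h (iter k h \bot).
Proof.
move=> mh hK; split; first by apply: le_anti; rewrite hK iter_bot_le_succ.
by move=> b hb; apply: iter_bot_le_prefixpoint => //; rewrite hb.
Qed.

Lemma iter_meet_le_iter_fmeet f g i j :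
  is_polynomial f -> is_polynomial g -> monotone f -> monotone g ->
  iter i f \bot `&` iter j g \bot <= iter (i + j).-1 (fmeet f g) \bot.
Proof.
move=> pf pg mf mg; elim: i j => [|i IHi] j; first by rewrite meet0x le0x.
elim: j => [|j IHj]; first by rewrite meetx0 le0x.
rewrite addSn addnS /= lexI; apply/andP; split.
  by apply: polynomial_meet_shift => //; have := IHi j.+1; rewrite addnS.
rewrite meetC; apply: polynomial_meet_shift => //.
by rewrite meetC; have := IHj; rewrite addSn.
Qed.

End HeytingPolynomials.

Theorem mainTheorem18 (H : heytingAlgebra) (f g : H -> H) (m n : nat) :
  is_polynomial f -> is_polynomial g -> monotone f -> monotone g ->
  is_lfp f (iter m f \bot) -> is_lfp g (iter n g \bot) ->
  is_lfp (fmeet f g) (iter (m + n).-1 (fmeet f g) \bot).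
Proof.
move=> pf pg mf mg [+ _] [+ _].
set F := iter m f \bot; set G := iter n g \bot => fF gG.
have mh := fmeet_monotone mf mg.
have hFG : fmeet f g (F `&` G) <= F `&` G.
  by rewrite -{2}fF -{2}gG; apply: leI2; [apply: mf; apply: leIl | apply: mg; apply: leIr].
have K_eq : iter (m + n).-1 (fmeet f g) \bot = F `&` G.
  by apply: le_anti; rewrite iter_bot_le_prefixpoint // iter_meet_le_iter_fmeet.
by apply: is_lfp_iter_bot => //; rewrite K_eq.
Qed.
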